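(* Let $H$ be a quasi-bialgebra over a field $k$, let $A$ be a left $H$-module algebra and let $B=A^{H}$ be its subalgebra of invariants. For a left $B$-module $M$, regard $A\otimes_B M$ as a left $(H,A)$-Hopf module via $h(a\otimes_B m)=h\cdot a\otimes_B m$ and $b(a\otimes_B m)=ba\otimes_B m$ for $h\in H$ and $a,b\in A$. For a left $(H,A)$-Hopf module $N$, regard $N^{H}=\{n\in N\mid hn=\varepsilon(h)n \text{ for all } h\in H\}$ as a left $B$-module. Then the functor $A\otimes_B(-):{}_B\mathcal{M}\to{}_A({}_H\mathcal{M})$ is left adjoint to the functor $(-)^{H}:{}_A({}_H\mathcal{M})\to{}_B\mathcal{M}$. The adjunction bijection $\mathrm{Hom}_{{}_A({}_H\mathcal{M})}(A\otimes_B M,N)\cong \mathrm{Hom}_B(M,N^H)$ is given by $f\mapsto (m\mapsto f(1_A\otimes_B m))$, with inverse $g\mapsto (a\otimes_B m\mapsto a\,g(m))$.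
   Context: A quasi-bialgebra $(H,\Delta,\varepsilon,\phi)$ over a field $k$ consists of an associative unital $k$-algebra $H$, algebra morphisms $\Delta:H\to H\otimes H$ and $\varepsilon:H\to k$, and an invertible element $\phi\in H\otimes H\otimes H$ satisfying the following conditions: - $\phi(\Delta\otimes I)\Delta(h)\phi^{-1}=(I\otimes\Delta)\Delta(h)$ for all $h\in H$; - $(I\otimes\varepsilon)\Delta(h)=(\varepsilon\otimes I)\Delta(h)=h$ for all $h\in H$; - $(I\otimes I\otimes\Delta)(\phi)(\Delta\otimes I\otimes I)(\phi)=(1\otimes\phi)(I\otimes\Delta\otimes I)(\phi)(\phi\otimes 1)$; - $(I\otimes\varepsilon\otimes I)(\phi)=1\otimes 1$. Notation: $\Delta(h)=h_1\otimes h_2$ with summation suppressed, $\phi=X^1\otimes X^2\otimes X^3$, and $\phi^{-1}=x^1\otimes x^2\otimes x^3$. A left $H$-module algebra is a left $H$-module $A$ (action $h\cdot a$) with a bilinear multiplication, which need not be associative, and a unit $1_A$, such that for all $a,b,c\in A$ and $h\in H$: - $(ab)c=(X^1\cdot a)[(X^2\cdot b)(X^3\cdot c)]$; - $h\cdot(ab)=(h_1\cdot a)(h_2\cdot b)$; - $h\cdot 1_A=\varepsilon(h)1_A$. The subalgebra of invariants is $B=A^H=\{a\in A\mid h\cdot a=\varepsilon(h)a\ \forall h\in H\}$. It is an associative algebra, and $A$ is a $B$-bimodule by multiplication. A left $(H,A)$-Hopf module is a left $H$-module $M$ together with a map $A\otimes M\to M$, $a\otimes m\mapsto am$, such that for all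 $h\in H$, $a,b\in A$, $m\in M$: - $(ab)m=(X^1\cdot a)[(X^2\cdot b)(X^3m)]$; - $h(am)=(h_1\cdot a)(h_2m)$; - $1_Am=m$. The category ${}_A({}_H\mathcal{M})$ has these objects, with morphisms the $H$-linear maps preserving the $A$-action. *)

(* Quasi-bialgebras, module algebras, Hopf modules and
   tensor products over B = A^H, encoded without a tensor-product library:
   - an element of H (x) H (resp. H^(x)3, H^(x)4) is represented by a finite
     list of pure tensors, and two representatives are equal in the tensor
     product iff every (multi)linear map out of H x H (x H ...) into any
     k-vector space takes the same summed value on them (this is exactly
     equality in the tensor product, by its universal property);
   - A (x)_B M is any k-vector space T with a B-balanced bilinear map
     tens : A -> M -> T having the universal property. *)
From HB Require Import structures.
From mathcomp Require Import all_boot all_order all_algebra.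
Set Implicit Arguments. Unset Strict Implicit. Unset Printing Implicit Defensive.
Import GRing.Theory.
Local Open Scope ring_scope.

Section Lin.
Variable k : fieldType.

Definition lin (U V : lmodType k) (f : U -> V) : Prop :=
  forall (c : k) (x y : U), f (c *: x + y) = c *: f x + f y.

Definition bilin (U W V : lmodType k) (f : U -> W -> V) : Prop :=
  (forall y, lin (fun x => f x y)) /\ (forall x, lin (f x)).

Definition trilin (U1 U2 U3 V : lmodType k) (f : U1 -> U2 -> U3 -> V) : Prop :=
  [/\ (forall y z, lin (fun x => f x y z)),
      (forall x z, lin (fun y => f x y z)) &
      (forall x y, lin (f x y))].

Definition quadrilin (U1 U2 U3 U4 V : lmodType k)
    (f : U1 -> U2 -> U3 -> U4 -> V) : Prop :=
  [/\ (forall y z w, lin (fun x => f x y z w)),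
      (forall x z w, lin (fun y => f x y z w)),
      (forall x y w, lin (fun z => f x y z w)) &
      (forall x y z, lin (f x y z))].
End Lin.

Section QuasiBialgebra.
Variables (k : fieldType) (H : algType k).

Definition T2 := (H * H)%type.
Definition T3 := (H * H * H)%type.
Definition T4 := (H * H * H * H)%type.

Definition teq2 (s t : seq T2) : Prop :=
  forall (V : lmodType k) (beta : H -> H -> V), bilin beta ->
    \sum_(p <- s) beta p.1 p.2 = \sum_(p <- t) beta p.1 p.2.
Definition teq3 (s t : seq T3) : Prop :=
  forall (V : lmodType k) (beta : H -> H -> H -> V), trilin beta ->
    \sum_(p <- s) beta p.1.1 p.1.2 p.2 = \sum_(p <- t) beta p.1.1 p.1.2 p.2.
Definition teq4 (s t : seq T4) : Prop :=
  forall (V : lmodType k) (beta : H -> H -> H -> H -> V), quadrilin beta ->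
    \sum_(p <- s) beta p.1.1.1 p.1.1.2 p.1.2 p.2
    = \sum_(p <- t) beta p.1.1.1 p.1.1.2 p.1.2 p.2.

Definition mul2 (s t : seq T2) : seq T2 :=
  [seq (p.1 * q.1, p.2 * q.2) | p <- s, q <- t].
Definition mul3 (s t : seq T3) : seq T3 :=
  [seq (p.1.1 * q.1.1, p.1.2 * q.1.2, p.2 * q.2) | p <- s, q <- t].
Definition mul4 (s t : seq T4) : seq T4 :=
  [seq (p.1.1.1 * q.1.1.1, p.1.1.2 * q.1.1.2, p.1.2 * q.1.2, p.2 * q.2)
  | p <- s, q <- t].

Variable Delta : H -> seq T2.

Definition DeltaI (s : seq T2) : seq T3 :=
  flatten [seq [seq (q.1, q.2, p.2) | q <- Delta p.1] | p <- s].
Definition IDelta (s : seq T2) : seq T3 :=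
  flatten [seq [seq (p.1, q.1, q.2) | q <- Delta p.2] | p <- s].
Definition IIDelta (s : seq T3) : seq T4 :=
  flatten [seq [seq (p.1.1, p.1.2, q.1, q.2) | q <- Delta p.2] | p <- s].
Definition DeltaII (s : seq T3) : seq T4 :=
  flatten [seq [seq (q.1, q.2, p.1.2, p.2) | q <- Delta p.1.1] | p <- s].
Definition IDeltaI (s : seq T3) : seq T4 :=
  flatten [seq [seq (p.1.1, q.1, q.2, p.2) | q <- Delta p.1.2] | p <- s].
Definition one_tensor (s : seq T3) : seq T4 :=
  [seq (1, p.1.1, p.1.2, p.2) | p <- s].
Definition tensor_one (s : seq T3) : seq T4 :=
  [seq (p.1.1, p.1.2, p.2, 1) | p <- s].

Record is_quasi_bialgebra (eps : H -> k) (phi phiinv : seq T3) : Prop := {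
  qb_Delta_lin : forall (c : k) (x y : H),
    teq2 (Delta (c *: x + y)) ([seq (c *: p.1, p.2) | p <- Delta x] ++ Delta y);
  qb_Delta_mul : forall x y : H, teq2 (Delta (x * y)) (mul2 (Delta x) (Delta y));
  qb_Delta_one : teq2 (Delta 1) [:: (1, 1)];
  qb_eps_lin : forall (c : k) (x y : H), eps (c *: x + y) = c * eps x + eps y;
  qb_eps_mul : forall x y : H, eps (x * y) = eps x * eps y;
  qb_eps_one : eps 1 = 1;
  qb_phi_inv_r : teq3 (mul3 phi phiinv) [:: (1, 1, 1)];
  qb_phi_inv_l : teq3 (mul3 phiinv phi) [:: (1, 1, 1)];
  qb_coassoc : forall h : H,
    teq3 (mul3 (mul3 phi (DeltaI (Delta h))) phiinv) (IDelta (Delta h));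
  qb_counit_l : forall h : H, \sum_(p <- Delta h) eps p.2 *: p.1 = h;
  qb_counit_r : forall h : H, \sum_(p <- Delta h) eps p.1 *: p.2 = h;
  qb_pentagon :
    teq4 (mul4 (IIDelta phi) (DeltaII phi))
         (mul4 (mul4 (one_tensor phi) (IDeltaI phi)) (tensor_one phi));
  qb_phi_normal : teq2 [seq (p.1.1, eps p.1.2 *: p.2) | p <- phi] [:: (1, 1)]
}.

Definition is_Hmodule (V : lmodType k) (act : H -> V -> V) : Prop :=
  [/\ bilin (act : H -> V -> V),
      (forall v, act 1 v = v) &
      (forall (h g : H) v, act (h * g) v = act h (act g v))].

Definition Hinvariant (eps : H -> k) (V : lmodType k) (act : H -> V -> V) (v : V)
  : Prop := forall h : H, act h v = eps h *: v.

Variables (eps : H -> k) (phi : seq T3).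

Record is_module_algebra (A : lmodType k) (mulA : A -> A -> A) (oneA : A)
    (actA : H -> A -> A) : Prop := {
  ma_Hmod : is_Hmodule actA;
  ma_mul_bilin : bilin mulA;
  ma_unit_l : forall a, mulA oneA a = a;
  ma_unit_r : forall a, mulA a oneA = a;
  ma_qassoc : forall a b c, mulA (mulA a b) c =
    \sum_(p <- phi) mulA (actA p.1.1 a) (mulA (actA p.1.2 b) (actA p.2 c));
  ma_act_mul : forall h a b,
    actA h (mulA a b) = \sum_(p <- Delta h) mulA (actA p.1 a) (actA p.2 b);
  ma_act_one : forall h, actA h oneA = eps h *: oneA
}.

Section OverA.
Variables (A : lmodType k) (mulA : A -> A -> A) (oneA : A) (actA : H -> A -> A).

Definition Binv := {a : A | Hinvariant eps actA a}.

Record is_Bmodule (M : lmodType k) (actM : Binv -> M -> M) : Prop := {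
  bm_lin : forall b, lin (actM b);
  bm_lin_l : forall (c : k) (b b' b'' : Binv) m,
    sval b'' = c *: sval b + sval b' -> actM b'' m = c *: actM b m + actM b' m;
  bm_mul : forall (b b' b'' : Binv) m,
    sval b'' = mulA (sval b) (sval b') -> actM b'' m = actM b (actM b' m);
  bm_one : forall (b : Binv) m, sval b = oneA -> actM b m = m
}.

Definition is_BHom (M M' : lmodType k) (actM : Binv -> M -> M)
    (actM' : Binv -> M' -> M') (g : M -> M') : Prop :=
  lin g /\ forall b m, g (actM b m) = actM' b (g m).

Definition balanced (M V : lmodType k) (actM : Binv -> M -> M)
    (beta : A -> M -> V) : Prop :=
  bilin beta /\ forall (b : Binv) a m, beta (mulA a (sval b)) m = beta a (actM b m).

Record is_tensor_product (M T : lmodType k) (actM : Binv -> M -> M)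
    (tens : A -> M -> T) : Prop := {
  tp_balanced : balanced actM tens;
  tp_exists : forall (V : lmodType k) (beta : A -> M -> V), balanced actM beta ->
    exists L : T -> V, lin L /\ forall a m, L (tens a m) = beta a m;
  tp_unique : forall (V : lmodType k) (L L' : T -> V), lin L -> lin L' ->
    (forall a m, L (tens a m) = L' (tens a m)) -> forall t, L t = L' t
}.

Record is_HopfModule (N : lmodType k) (actN : H -> N -> N) (aN : A -> N -> N)
  : Prop := {
  hm_Hmod : is_Hmodule actN;
  hm_bilin : bilin aN;
  hm_qassoc : forall a b n, aN (mulA a b) n =
    \sum_(p <- phi) aN (actA p.1.1 a) (aN (actA p.1.2 b) (actN p.2 n));
  hm_compat : forall h a n,
    actN h (aN a n) = \sum_(p <- Delta h) aN (actA p.1 a) (actN p.2 n);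
  hm_unit : forall n, aN oneA n = n
}.

Definition is_HopfHom (N N' : lmodType k) (actN : H -> N -> N) (aN : A -> N -> N)
    (actN' : H -> N' -> N') (aN' : A -> N' -> N') (f : N -> N') : Prop :=
  [/\ lin f,
      (forall h n, f (actN h n) = actN' h (f n)) &
      (forall a n, f (aN a n) = aN' a (f n))].

Definition is_BHom_inv (M N : lmodType k) (actM : Binv -> M -> M)
    (actN : H -> N -> N) (aN : A -> N -> N) (g : M -> N) : Prop :=
  [/\ (forall m, Hinvariant eps actN (g m)),
      lin g &
      (forall (b : Binv) m, g (actM b m) = aN (sval b) (g m))].

End OverA.
End QuasiBialgebra.

(* The two assignments f |-> f (1 (x) -) and g |-> (a (x) m |-> a g(m)) are
   formally inverse, since a Hopf-module map out of A (x)_B M is A-linear.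
   The substance lies in two facts about H-invariant elements n of a Hopf
   module N: a n is invariant again when a is, and the A-action is
   associative on them, (a a') n = a (a' n).  The latter is what makes
   a (x) m |-> a g(m) B-balanced and A-linear; it holds because
   (I (x) I (x) eps)(phi) = 1 (x) 1.  This normalisation is not an axiom:
   applying I (x) I (x) eps (x) I to the pentagon identity gives
   phi = phi ((I (x) I (x) eps)(phi) (x) 1), and phi is invertible. *)

From mathcomp Require Import all_boot all_order all_algebra.

Set Implicit Arguments.
Unset Strict Implicit.
Unset Printing Implicit Defensive.
Import GRing.Theory.
Local Open Scope ring_scope.

Section Linear.
Variable k : fieldType.
Implicit Types U V W : lmodType k.

Lemma lin0 U V (f : U -> V) : lin f -> f 0 = 0.
Proof.
move=> hf; have e := hf 1 0 0; rewrite scaler0 addr0 scale1r in e.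
by apply: (@addrI _ (f 0)); rewrite addr0 -e.
Qed.

Lemma linD U V (f : U -> V) : lin f -> forall x y, f (x + y) = f x + f y.
Proof. by move=> hf x y; have := hf 1 x y; rewrite !scale1r. Qed.

Lemma linZ U V (f : U -> V) : lin f -> forall c x, f (c *: x) = c *: f x.
Proof. by move=> hf c x; have := hf c x 0; rewrite (lin0 hf) !addr0. Qed.

Lemma lin_sum U V (f : U -> V) I (r : seq I) (F : I -> U) : lin f ->
  f (\sum_(i <- r) F i) = \sum_(i <- r) f (F i).
Proof.
move=> hf; elim: r => [|a r IH]; first by rewrite !big_nil lin0.
by rewrite !big_cons linD // IH.
Qed.

Lemma lin_sumf U V I (r : seq I) (F : I -> U -> V) :
  (forall i, lin (F i)) -> lin (fun x => \sum_(i <- r) F i x).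
Proof.
move=> hF c x y; transitivity (\sum_(i <- r) (c *: F i x + F i y)).
  by apply: eq_bigr => i _; apply: hF.
by rewrite big_split scaler_sumr.
Qed.

Lemma lin_comp U V W (f : V -> W) (g : U -> V) :
  lin f -> lin g -> lin (fun x => f (g x)).
Proof. by move=> hf hg c x y; rewrite hg hf. Qed.

Lemma lin_scaler V (c : k) : lin (fun x : V => c *: x).
Proof. by move=> d x y; rewrite scalerDr !scalerA mulrC. Qed.

Lemma lin_scale U V (f : U -> V) (c : k) : lin f -> lin (fun x => c *: f x).
Proof. by move=> hf; apply: lin_comp (lin_scaler c) hf. Qed.

Lemma lin_add U V (f g : U -> V) : lin f -> lin g -> lin (fun x => f x + g x).
Proof.
move=> hf hg d x y; rewrite hf hg scalerDr.
by rewrite -!addrA; congr (_ + _); rewrite addrCA.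
Qed.

End Linear.

Section QuasiBialgebra.
Variables (k : fieldType) (H : algType k) (Delta : H -> seq (H * H))
  (eps : H -> k) (phi phiinv : seq (H * H * H)).
Hypothesis hH : is_quasi_bialgebra Delta eps phi phiinv.

Lemma eps0 : eps 0 = 0.
Proof.
have e := qb_eps_lin hH 1 0 0; rewrite scaler0 addr0 mul1r in e.
by apply: (@addrI _ (eps 0)); rewrite addr0 -e.
Qed.

Lemma epsZ c x : eps (c *: x) = c * eps x.
Proof. by have := qb_eps_lin hH c x 0; rewrite addr0 eps0 addr0. Qed.

Lemma lin_mull (x : H) : lin (fun a : H => x * a).
Proof. by move=> c a b; rewrite mulrDr scalerAr. Qed.

Lemma lin_mulr (x : H) : lin (fun a : H => a * x).
Proof. by move=> c a b; rewrite mulrDl scalerAl. Qed.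

Lemma lin_eps_scale (V : lmodType k) (w : V) : lin (fun z : H => eps z *: w).
Proof. by move=> c a b; rewrite (qb_eps_lin hH) scalerDl scalerA. Qed.

Lemma counit_lin_l (V : lmodType k) (F : H -> V) h : lin F ->
  \sum_(p <- Delta h) eps p.2 *: F p.1 = F h.
Proof.
move=> hF; rewrite -{2}(qb_counit_l hH h) lin_sum //.
by apply: eq_bigr => p _; rewrite linZ.
Qed.

Lemma counit_lin_r (V : lmodType k) (F : H -> V) h : lin F ->
  \sum_(p <- Delta h) eps p.1 *: F p.2 = F h.
Proof.
move=> hF; rewrite -{2}(qb_counit_r hH h) lin_sum //.
by apply: eq_bigr => p _; rewrite linZ.
Qed.

Lemma Delta_bilin (V : lmodType k) (beta : H -> H -> V) : bilin beta ->
  lin (fun h => \sum_(p <- Delta h) beta p.1 p.2).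
Proof.
move=> hb c x y; rewrite (qb_Delta_lin hH c x y hb) big_cat big_map /=.
congr (_ + _); rewrite scaler_sumr; apply: eq_bigr => p _.
exact: (linZ (hb.1 p.2)).
Qed.

Lemma Delta_one (V : lmodType k) (beta : H -> H -> V) : bilin beta ->
  \sum_(p <- Delta 1) beta p.1 p.2 = beta 1 1.
Proof. by move=> hb; rewrite (qb_Delta_one hH hb) big_seq1. Qed.

Lemma phi_normal (V : lmodType k) (beta : H -> H -> V) : bilin beta ->
  \sum_(p <- phi) beta p.1.1 (eps p.1.2 *: p.2) = beta 1 1.
Proof. by move=> hb; have := qb_phi_normal hH hb; rewrite big_map big_seq1. Qed.

Section Counit3.
Variables (V : lmodType k) (delta : H -> H -> H -> V).
Hypothesis hdelta : trilin delta.

Definition counit3 (y1 y2 y3 y4 : H) : V := delta y1 y2 (eps y3 *: y4).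

Lemma counit3_quadrilin : quadrilin counit3.
Proof.
case: hdelta => d1 d2 d3; split=> [y z w|x z w|x y w|x y z]; rewrite /counit3.
- exact: d1.
- exact: d2.
- exact: lin_comp (d3 x y) (lin_eps_scale w).
- exact: lin_comp (d3 x y) (lin_scaler _).
Qed.

Lemma pentagon_counit3_l :
  \sum_(p <- mul4 (IIDelta Delta phi) (DeltaII Delta phi))
     counit3 p.1.1.1 p.1.1.2 p.1.2 p.2 = \sum_(X <- phi) delta X.1.1 X.1.2 X.2.
Proof.
case: hdelta => d1 d2 d3.
rewrite /mul4 /IIDelta /DeltaII !big_allpairs_dep /=; apply: eq_bigr => X _.
pose Phi z := \sum_(q <- phi) \sum_(e <- Delta q.1.1)
  delta (X.1.1 * e.1) (X.1.2 * e.2) (eps q.1.2 *: (z * q.2)).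
transitivity (\sum_(d <- Delta X.2) eps d.1 *: Phi d.2).
  apply: eq_bigr => d _; rewrite big_allpairs_dep /Phi scaler_sumr.
  apply: eq_bigr => q _; rewrite scaler_sumr; apply: eq_bigr => e _ /=.
  by rewrite /counit3 (qb_eps_mul hH) -scalerA (linZ (d3 _ _)).
rewrite counit_lin_r; last first.
  apply: lin_sumf => q; apply: lin_sumf => e.
  exact: lin_comp (d3 _ _) (lin_comp (lin_scaler _) (lin_mulr _)).
pose Th u v := \sum_(e <- Delta u) delta (X.1.1 * e.1) (X.1.2 * e.2) (X.2 * v).
have hb v : bilin (fun a b => delta (X.1.1 * a) (X.1.2 * b) (X.2 * v)).
  by split=> [b|a]; [apply: lin_comp (d1 _ _) (lin_mull _)
                    |apply: lin_comp (d2 _ _) (lin_mull _)].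
have hTh : bilin Th.
  split=> [v|u]; first exact: Delta_bilin (hb v).
  by apply: lin_sumf => e; apply: lin_comp (d3 _ _) (lin_mull _).
transitivity (\sum_(q <- phi) Th q.1.1 (eps q.1.2 *: q.2)).
  by apply: eq_bigr => q _; apply: eq_bigr => e _; rewrite scalerAr.
by rewrite phi_normal // /Th (Delta_one (hb 1)) !mulr1.
Qed.

Lemma pentagon_counit3_r :
  \sum_(p <- mul4 (mul4 (one_tensor phi) (IDeltaI Delta phi)) (tensor_one phi))
     counit3 p.1.1.1 p.1.1.2 p.1.2 p.2 =
  \sum_(Y <- phi) \sum_(W <- phi)
     delta (Y.1.1 * W.1.1) (Y.1.2 * W.1.2) (eps W.2 *: Y.2).
Proof.
case: hdelta => d1 d2 d3.
rewrite /mul4 /one_tensor /IDeltaI /tensor_one !big_allpairs_dep big_map /=.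
pose Psi u v := \sum_(Y <- phi) \sum_(e <- Delta Y.1.2) \sum_(W <- phi)
  delta (Y.1.1 * W.1.1) (u * e.1 * W.1.2) ((eps e.2 * eps W.2) *: (v * Y.2)).
transitivity (\sum_(j <- phi) Psi j.1.1 (eps j.1.2 *: j.2)).
  apply: eq_bigr => j _; rewrite big_allpairs_dep /Psi; apply: eq_bigr => Y _.
  apply: eq_bigr => e _; rewrite big_map; apply: eq_bigr => W _ /=.
  rewrite /counit3 !mul1r !mulr1 !(qb_eps_mul hH) -scalerAl scalerA.
  by congr (delta _ _ (_ *: _)); rewrite [in RHS]mulrC mulrA.
have hPsi : bilin Psi.
  split=> [v|u]; apply: lin_sumf => Y; apply: lin_sumf => e; apply: lin_sumf => W.
  - exact: lin_comp (d2 _ _) (lin_comp (lin_mulr _) (lin_mulr _)).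
  - exact: lin_comp (d3 _ _) (lin_comp (lin_scaler _) (lin_mulr _)).
rewrite phi_normal //; apply: eq_bigr => Y _.
pose Xi z := \sum_(W <- phi) delta (Y.1.1 * W.1.1) (z * W.1.2) (eps W.2 *: Y.2).
rewrite -[RHS]/(Xi Y.1.2) -(@counit_lin_l _ Xi Y.1.2); last first.
  by apply: lin_sumf => W; apply: lin_comp (d2 _ _) (lin_mulr _).
apply: eq_bigr => e _; rewrite scaler_sumr; apply: eq_bigr => W _.
by rewrite !mul1r -scalerA (linZ (d3 _ _)).
Qed.

(* phi = phi ((I (x) I (x) eps)(phi) (x) 1), tested against [delta]. *)
Lemma phi_mul_counit3 : \sum_(X <- phi) delta X.1.1 X.1.2 X.2 =
  \sum_(Y <- phi) \sum_(W <- phi)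
     delta (Y.1.1 * W.1.1) (Y.1.2 * W.1.2) (eps W.2 *: Y.2).
Proof.
rewrite -pentagon_counit3_l -pentagon_counit3_r.
exact: (qb_pentagon hH counit3_quadrilin).
Qed.

End Counit3.

Lemma counit3_phi_trilin (V : lmodType k) (beta : H -> H -> H -> V) :
  trilin beta -> beta 1 1 1 = \sum_(W <- phi) beta W.1.1 W.1.2 (eps W.2 *: 1).
Proof.
move=> hb; case: (hb) => b1 b2 b3.
pose delta y1 y2 y3 :=
  \sum_(Z <- phiinv) beta (Z.1.1 * y1) (Z.1.2 * y2) (Z.2 * y3).
have hdelta : trilin delta.
  split=> [y z|x z|x y]; apply: lin_sumf => Z.
  - exact: lin_comp (b1 _ _) (lin_mull _).
  - exact: lin_comp (b2 _ _) (lin_mull _).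
  - exact: lin_comp (b3 _ _) (lin_mull _).
have := phi_mul_counit3 hdelta; rewrite /delta exchange_big /=.
have := qb_phi_inv_l hH hb; rewrite /mul3 big_allpairs_dep big_seq1 /= => ->.
move=> ->; rewrite exchange_big /=; apply: eq_bigr => W _; rewrite exchange_big /=.
pose betaW u1 u2 u3 := beta (u1 * W.1.1) (u2 * W.1.2) (eps W.2 *: u3).
have hbW : trilin betaW.
  split=> [y z|x z|x y].
  - exact: lin_comp (b1 _ _) (lin_mulr _).
  - exact: lin_comp (b2 _ _) (lin_mulr _).
  - exact: lin_comp (b3 _ _) (lin_scaler _).
have := qb_phi_inv_l hH hbW.
rewrite /mul3 big_allpairs_dep big_seq1 /= /betaW !mul1r => <-.
apply: eq_bigr => Z _; apply: eq_bigr => Y _.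
by rewrite !mulrA scalerAr.
Qed.

Lemma counit3_phi (V : lmodType k) (beta : H -> H -> V) : bilin beta ->
  \sum_(p <- phi) beta p.1.1 (eps p.2 *: p.1.2) = beta 1 1.
Proof.
move=> [hb1 hb2].
pose beta3 u1 u2 u3 := eps u3 *: beta u1 u2.
have hbeta3 : trilin beta3.
  split=> [y z|x z|x y]; rewrite /beta3.
  - exact: lin_scale (hb1 _).
  - exact: lin_scale (hb2 _).
  - exact: lin_eps_scale.
have := counit3_phi_trilin hbeta3; rewrite /beta3 (qb_eps_one hH) scale1r => ->.
apply: eq_bigr => W _; rewrite epsZ (qb_eps_one hH) mulr1.
by rewrite (linZ (hb2 _)).
Qed.
End QuasiBialgebra.

Section ModuleAlgebra.
Variables (k : fieldType) (H : algType k) (Delta : H -> seq (H * H))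
  (eps : H -> k) (phi phiinv : seq (H * H * H)).
Hypothesis hH : is_quasi_bialgebra Delta eps phi phiinv.
Variables (A : lmodType k) (mulA : A -> A -> A) (oneA : A) (actA : H -> A -> A).
Hypothesis hA : is_module_algebra Delta eps phi mulA oneA actA.

Section HopfModule.
Variables (N : lmodType k) (actN : H -> N -> N) (aN : A -> N -> N).
Hypothesis hN : is_HopfModule Delta phi mulA oneA actA actN aN.

Lemma HopfModule_mul_invariant a a' n : Hinvariant eps actN n ->
  aN (mulA a a') n = aN a (aN a' n).
Proof.
have [[[ab1 _] aone _] _ _ _ _ _ _] := hA.
have [_ [aNb1 aNb2] nqa _ _] := hN.
move=> hn; rewrite nqa.
pose beta x y := aN (actA x a) (aN (actA y a') n).
have hbeta : bilin beta.
  split=> [y|x]; first exact: lin_comp (aNb1 _) (ab1 _).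
  exact: lin_comp (aNb2 _) (lin_comp (aNb1 _) (ab1 _)).
transitivity (\sum_(p <- phi) beta p.1.1 (eps p.2 *: p.1.2)).
  apply: eq_bigr => p _; rewrite /beta hn (linZ (aNb2 _)).
  by rewrite (linZ (ab1 _)) (linZ (aNb1 _)).
by rewrite (counit3_phi hH hbeta) /beta !aone.
Qed.

Lemma HopfModule_act_invariant a n : Hinvariant eps actA a ->
  Hinvariant eps actN n -> Hinvariant eps actN (aN a n).
Proof.
have [_ [aNb1 aNb2] _ ncompat _] := hN.
move=> ha hn h; rewrite ncompat.
rewrite -(counit_lin_r hH h (lin_eps_scale hH (aN a n))).
apply: eq_bigr => p _.
by rewrite ha hn (linZ (aNb1 _)) (linZ (aNb2 _)).
Qed.

End HopfModule.

Section TensorProduct.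
Variables (M : lmodType k) (actM : Binv eps actA -> M -> M).
Variables (T : lmodType k) (tens : A -> M -> T).
Hypothesis hT : is_tensor_product mulA actM tens.
Variables (actT : H -> T -> T) (aT : A -> T -> T).
Hypotheses (actT_lin : forall h, lin (actT h)) (aT_lin : forall a, lin (aT a)).
Hypothesis actT_def : forall h a m, actT h (tens a m) = tens (actA h a) m.
Hypothesis aT_def : forall b a m, aT b (tens a m) = tens (mulA b a) m.

Lemma tensor_Hmodule : is_Hmodule actT.
Proof.
have [[[ab1 _] aone amul] _ _ _ _ _ _] := hA.
have [[[tb1 _] _] _ tuniq] := hT.
split; last 2 first.
- move=> t; apply: (tuniq _ (actT 1) id (actT_lin _)) => // a m.
  by rewrite actT_def aone.
- move=> h g t.
  apply: (tuniq _ (actT (h * g)) (fun t => actT h (actT g t))) => [||a m].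
  + exact: actT_lin.
  + exact: lin_comp (actT_lin _) (actT_lin _).
  by rewrite !actT_def amul.
split=> // t c x y.
apply: (tuniq _ (fun t => actT (c *: x + y) t)
                (fun t => c *: actT x t + actT y t)) => [||a m].
- exact: actT_lin.
- exact: lin_add (lin_scale _ (actT_lin _)) (actT_lin _).
by rewrite !actT_def ab1 tb1.
Qed.

Lemma tensor_HopfModule : is_HopfModule Delta phi mulA oneA actA actT aT.
Proof.
have [_ [mb1 _] mu_l _ mqa mact _] := hA.
have [[[tb1 _] _] _ tuniq] := hT.
split; first exact: tensor_Hmodule.
- split=> // t c x y.
  apply: (tuniq _ (fun t => aT (c *: x + y) t)
                  (fun t => c *: aT x t + aT y t)) => [||a m].
  + exact: aT_lin.
  + exact: lin_add (lin_scale _ (aT_lin _)) (aT_lin _).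
  by rewrite !aT_def mb1 tb1.
- move=> a b t; apply: (tuniq _ (aT (mulA a b)) (fun t =>
    \sum_(p <- phi) aT (actA p.1.1 a) (aT (actA p.1.2 b) (actT p.2 t))))
    => [||a' m].
  + exact: aT_lin.
  + apply: lin_sumf => p; apply: lin_comp (aT_lin _) _.
    exact: lin_comp (aT_lin _) (actT_lin _).
  rewrite aT_def mqa (lin_sum _ _ (tb1 m)).
  by apply: eq_bigr => p _; rewrite actT_def !aT_def.
- move=> h a t; apply: (tuniq _ (fun t => actT h (aT a t)) (fun t =>
    \sum_(p <- Delta h) aT (actA p.1 a) (actT p.2 t))) => [||a' m].
  + exact: lin_comp (actT_lin _) (aT_lin _).
  + by apply: lin_sumf => p; apply: lin_comp (aT_lin _) (actT_lin _).
  rewrite aT_def actT_def mact (lin_sum _ _ (tb1 m)).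
  by apply: eq_bigr => p _; rewrite actT_def !aT_def.
- move=> t; apply: (tuniq _ (aT oneA) id (aT_lin _)) => // a m.
  by rewrite aT_def mu_l.
Qed.

Variables (N : lmodType k) (actN : H -> N -> N) (aN : A -> N -> N).
Hypothesis hN : is_HopfModule Delta phi mulA oneA actA actN aN.

Lemma HopfHom_tens f : is_HopfHom actT aT actN aN f ->
  forall a m, f (tens a m) = aN a (f (tens oneA m)).
Proof.
have [_ _ _ mu_r _ _ _] := hA.
by move=> [_ _ hfa] a m; rewrite -hfa aT_def mu_r.
Qed.

Lemma HopfHom_unit_BHom f : is_HopfHom actT aT actN aN f ->
  is_BHom_inv actM actN aN (fun m => f (tens oneA m)).
Proof.
have [_ _ mu_l mu_r _ _ mone] := hA.
have [[[tb1 tb2] tbB] _ _] := hT.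
move=> [hfl hfact hfa]; split.
- by move=> m h; rewrite -hfact actT_def mone (linZ (tb1 m)) (linZ hfl).
- exact: lin_comp hfl (tb2 _).
- by move=> b m; rewrite -tbB mu_l -hfa aT_def mu_r.
Qed.

Lemma BHom_inv_extend g : is_BHom_inv actM actN aN g ->
  exists2 f, is_HopfHom actT aT actN aN f & forall a m, f (tens a m) = aN a (g m).
Proof.
have [[[ab1 _] _ _] _ _ _ _ _ _] := hA.
have [_ texists tuniq] := hT.
have [[[_ nb2] _ _] [aNb1 aNb2] _ ncompat _] := hN.
move=> [ginv glin gB].
have hbal : balanced mulA actM (fun a m => aN a (g m)).
  split; first by split=> [m|a]; [apply: aNb1 | apply: lin_comp (aNb2 a) glin].
  by move=> b a m; rewrite gB (HopfModule_mul_invariant hN).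
have [L [hL hLt]] := texists N _ hbal.
exists L => //; split=> // [h t|a t].
- apply: (tuniq _ (fun t => L (actT h t)) (fun t => actN h (L t))) => [||a m].
  + exact: lin_comp hL (actT_lin h).
  + exact: lin_comp (nb2 h) hL.
  rewrite actT_def !hLt ncompat.
  rewrite -(counit_lin_l hH h (lin_comp (aNb1 (g m)) (ab1 a))).
  by apply: eq_bigr => p _; rewrite ginv (linZ (aNb2 _)).
- apply: (tuniq _ (fun t => L (aT a t)) (fun t => aN a (L t))) => [||a' m].
  + exact: lin_comp hL (aT_lin a).
  + exact: lin_comp (aNb2 a) hL.
  by rewrite aT_def !hLt (HopfModule_mul_invariant hN).
Qed.

End TensorProduct.
End ModuleAlgebra.

Theorem mainTheorem1
  (k : fieldType) (H : algType k)
  (Delta : H -> seq (H * H)) (eps : H -> k) (phi phiinv : seq (H * H * H))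
  (hH : is_quasi_bialgebra Delta eps phi phiinv)
  (A : lmodType k) (mulA : A -> A -> A) (oneA : A) (actA : H -> A -> A)
  (hA : is_module_algebra Delta eps phi mulA oneA actA)
  (M : lmodType k) (actM : Binv eps actA -> M -> M)
  (hM : is_Bmodule mulA oneA actM)
  (T : lmodType k) (tens : A -> M -> T)
  (hT : is_tensor_product mulA actM tens)
  (actT : H -> T -> T) (aT : A -> T -> T)
  (actT_lin : forall h, lin (actT h)) (aT_lin : forall a, lin (aT a))
  (actT_def : forall h a m, actT h (tens a m) = tens (actA h a) m)
  (aT_def : forall b a m, aT b (tens a m) = tens (mulA b a) m) :
  (* A (x)_B M is a left (H,A)-Hopf module *)
  is_HopfModule Delta phi mulA oneA actA actT aT /\
  forall (N : lmodType k) (actN : H -> N -> N) (aN : A -> N -> N),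
    is_HopfModule Delta phi mulA oneA actA actN aN ->
    [/\ (* N^H is a left B-module via the A-action *)
        (forall (b : Binv eps actA) (n : N),
           Hinvariant eps actN n -> Hinvariant eps actN (aN (sval b) n)),
        (* f |-> (m |-> f (1 (x) m)) maps Hom_{A(HM)} (A (x)_B M, N) to Hom_B (M, N^H) *)
        (forall f : T -> N, is_HopfHom actT aT actN aN f ->
           is_BHom_inv actM actN aN (fun m => f (tens oneA m))),
        (* g |-> (a (x) m |-> a g(m)) is well defined: a unique such morphism exists *)
        (forall g : M -> N, is_BHom_inv actM actN aN g ->
           (exists f : T -> N, is_HopfHom actT aT actN aN f /\
              forall a m, f (tens a m) = aN a (g m)) /\
           (forall f f' : T -> N,
              is_HopfHom actT aT actN aN f -> is_HopfHom actT aT actN aN f' ->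
              (forall a m, f (tens a m) = aN a (g m)) ->
              (forall a m, f' (tens a m) = aN a (g m)) -> forall t, f t = f' t)),
        (* the two assignments are mutually inverse *)
        (forall (g : M -> N) (f : T -> N), is_BHom_inv actM actN aN g ->
           is_HopfHom actT aT actN aN f ->
           (forall a m, f (tens a m) = aN a (g m)) -> forall m, f (tens oneA m) = g m) &
        (forall f : T -> N, is_HopfHom actT aT actN aN f ->
           forall a m, f (tens a m) = aN a (f (tens oneA m)))].
Proof.
have hTHopf := tensor_HopfModule hA hT actT_lin aT_lin actT_def aT_def.
split=> // N actN aN hN; split.
- by move=> b n; apply: (HopfModule_act_invariant hH hN (svalP b)).
- by move=> f; apply: (HopfHom_unit_BHom hA hT actT_def aT_def (f := f)).
- move=> g hg; split.
    have [f hf hfg] := BHom_inv_extend hH hA hT actT_lin aT_lin actT_def aT_def hN hg.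
    by exists f.
  move=> f f' [hf _ _] [hf' _ _] ef ef' t.
  by apply: (tp_unique hT hf hf') => a m; rewrite ef ef'.
- by move=> g f _ _ ef m; rewrite ef (hm_unit hN).
- by move=> f; apply: (HopfHom_tens hA aT_def (f := f)).
Qed.
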